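(* Let $S$ be an independent set of $M$ and $F=\mathrm{cl}(S)$. If $G$ is a hyperplane of $M^\perp$ with $F\cup G\neq E$, then $F\cup G\cup P(S)\neq E$.
   Context: Let $M$ be a matroid with no loops and no coloops on the ground set $E=\{0,1,\dots,n\}$, totally ordered by the usual order of integers; $M^\perp$ its dual, $\mathrm{cl}$ the closure operator of $M$. For an independent set $S$ of $M$, $P(S)=\{e\in E-S:\ \text{there is a cocircuit } C^\perp \text{ of } M \text{ with } C^\perp\subseteq E-S \text{ and } e=\min C^\perp\}$; it is known that $S\sqcup P(S)$ is the lexicographically smallest basis of $M$ containing $S$. *)

From mathcomp Require Import all_boot.
Set Implicit Arguments. Unset Strict Implicit. Unset Printing Implicit Defensive.

(* A matroid on a finite ground set T (ground set = all of T). *)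
Record matroid (T : finType) := Matroid {
  indep : {set T} -> bool;
  indep0 : indep set0;
  indep_sub : forall A B : {set T}, A \subset B -> indep B -> indep A;
  indep_aug : forall A B : {set T}, indep A -> indep B -> #|A| < #|B| ->
                exists2 x, x \in B :\: A & indep (x |: A)
}.

Section Generic.
Variable T : finType.

Definition rank_of (ind : {set T} -> bool) (A : {set T}) : nat :=
  \max_(B : {set T} | (B \subset A) && ind B) #|B|.

Definition closure_of (ind : {set T} -> bool) (A : {set T}) : {set T} :=
  [set x | rank_of ind (x |: A) == rank_of ind A].

Definition hyperplane_of (ind : {set T} -> bool) (H : {set T}) : bool :=
  (closure_of ind H == H) && ((rank_of ind H).+1 == rank_of ind setT).

Variable M : matroid T.

Definition basis (B : {set T}) : bool :=
  indep M B && [forall x, (x \notin B) ==> ~~ indep M (x |: B)].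

(* independent sets of the dual matroid M^perp: sets disjoint from some basis *)
Definition coindep (I : {set T}) : bool :=
  [exists B : {set T}, basis B && [disjoint I & B]].

Definition cl (A : {set T}) : {set T} := closure_of (indep M) A.

Definition dual_hyperplane (H : {set T}) : bool := hyperplane_of coindep H.

Definition cocircuit (C : {set T}) : bool :=
  ~~ coindep C && [forall x in C, coindep (C :\ x)].

Definition loopless : Prop := forall x : T, indep M [set x].
Definition coloopless : Prop := forall x : T, exists2 B, basis B & x \notin B.

End Generic.

(* Ground set E = {0,...,n} = 'I_n.+1 with its usual order. *)
Definition Pset (n : nat) (M : matroid 'I_n.+1) (S : {set 'I_n.+1}) : {set 'I_n.+1} :=
  [set e | (e \notin S) &&
     [exists C : {set 'I_n.+1},
        [&& cocircuit M C, C \subset ~: S, e \in C & [forall y in C, (e <= y)%N]]]].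

From mathcomp Require Import all_boot.
Set Implicit Arguments. Unset Strict Implicit. Unset Printing Implicit Defensive.

(* Suppose F u G u P(S) = E, where F = cl(S), and pick an
   element outside F u G; it lies in P(S).  Let e be the LARGEST element of
   P(S) outside G, and C a cocircuit avoiding S with e = min C.  The
   complement D = E - G of a hyperplane of the dual is a circuit of M and
   contains e.  A circuit and a cocircuit never meet in exactly one element
   (orthogonality), so some y <> e lies in C n D.  Then y is not in G nor in
   S; if y were in F, the circuit inside S + y would meet C only in y,
   contradicting orthogonality again; so y is in P(S), whence y <= e by the
   choice of e and e <= y since e = min C: y = e, a contradiction. *)

Section Rank.
Variable T : finType.
Implicit Types (ind : {set T} -> bool) (A B H : {set T}).

Lemma rank_ge ind A B : B \subset A -> ind B -> #|B| <= rank_of ind A.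
Proof. by move=> sBA iB; apply: (@leq_bigmax_cond _ _ (fun B => #|B|) B); rewrite sBA iB. Qed.

Lemma rank_le ind A : rank_of ind A <= #|A|.
Proof. by apply/bigmax_leqP => B /andP[sBA _]; exact: subset_leq_card. Qed.

Lemma rank_mono ind A A' : A \subset A' -> rank_of ind A <= rank_of ind A'.
Proof.
move=> sAA'; apply/bigmax_leqP => B /andP[sBA iB]; apply: rank_ge iB.
exact: subset_trans sBA sAA'.
Qed.

Lemma rank_witness ind A :
  ind set0 -> exists2 B : {set T}, (B \subset A) && ind B & rank_of ind A = #|B|.
Proof.
move=> ind0.
case: (@arg_maxnP _ set0 (fun B => (B \subset A) && ind B) (fun B => #|B|)).
  by rewrite sub0set.
move=> B HB Bmax; exists B => //; apply/eqP; rewrite eqn_leq.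
apply/andP; split; first by apply/bigmax_leqP => C /Bmax.
by case/andP: HB => sBA iB; apply: rank_ge.
Qed.

Lemma hyperplane_add_rank ind H x : hyperplane_of ind H -> x \notin H ->
  rank_of ind (x |: H) = rank_of ind setT.
Proof.
case/andP=> /eqP clH /eqP rH xH.
have ne : rank_of ind (x |: H) != rank_of ind H by move: xH; rewrite -{1}clH inE.
apply/eqP; rewrite eqn_leq rank_mono ?subsetT //= -rH ltn_neqAle eq_sym ne.
exact/rank_mono/subsetUr.
Qed.

Lemma closure_dep ind S y : ind S -> y \in closure_of ind S -> y \notin S ->
  ~~ ind (y |: S).
Proof.
rewrite inE => _ /eqP ryS yS; apply/negP => iyS.
have := rank_ge (subxx (y |: S)) iyS.
by rewrite ryS cardsU1 yS add1n ltnNge rank_le.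
Qed.
End Rank.

Section Bases.
Variable T : finType.
Variable M : matroid T.
Implicit Types (A B J X : {set T}).

Definition circuit (D : {set T}) : bool :=
  ~~ indep M D && [forall x in D, indep M (D :\ x)].

Lemma basis_ext A : indep M A -> exists2 B : {set T}, basis M B & A \subset B.
Proof.
move=> iA.
case: (@arg_maxnP _ A (fun B => indep M B && (A \subset B)) (fun B => #|B|)).
  by rewrite iA subxx.
move=> B /andP[iB sAB] Bmax; exists B => //.
apply/andP; split => //; apply/forallP => x; apply/implyP => xB; apply/negP => ixB.
have := Bmax (x |: B); rewrite ixB (subset_trans sAB (subsetUr _ _)).
by move=> /(_ isT); rewrite cardsU1 xB add1n; apply/negP; rewrite -ltnNge.
Qed.

Lemma indep_card_basis B X : basis M B -> indep M X -> #|X| <= #|B|.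
Proof.
move=> /andP[iB /forallP Bmax] iX; rewrite leqNgt; apply/negP => ltBX.
have [x /setDP[_ xB] ixB] := indep_aug iB iX ltBX.
by have := Bmax x; rewrite xB ixB.
Qed.

Lemma basis_card B B' : basis M B -> basis M B' -> #|B| = #|B'|.
Proof.
move=> bB bB'; apply/eqP; rewrite eqn_leq.
by rewrite (indep_card_basis bB' (proj1 (andP bB))) (indep_card_basis bB (proj1 (andP bB'))).
Qed.

Lemma basis_of_card B X : basis M B -> indep M X -> #|B| <= #|X| -> basis M X.
Proof.
move=> bB iX leBX; apply/andP; split => //; apply/forallP => x; apply/implyP => xX.
apply/negP => ixX; have := indep_card_basis bB ixX.
by rewrite cardsU1 xX add1n ltnNge leBX.
Qed.

Lemma basis_exchange B e J : basis M B -> e \in B -> indep M J -> e \notin J ->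
  ~~ indep M (e |: J) -> exists2 B' : {set T}, basis M B' & B' \subset (B :\ e) :|: J.
Proof.
move=> bB eB iJ eJ deJ; set U := (B :\ e) :|: J.
case: (@arg_maxnP _ J (fun X => [&& indep M X, J \subset X & X \subset U])
                      (fun X => #|X|)).
  by rewrite iJ subxx subsetUr.
move=> X /and3P[iX sJX sXU] Xmax; exists X => //.
apply: (basis_of_card bB iX); rewrite leqNgt; apply/negP => ltXB.
have [x /setDP[xB xX] ixX] := indep_aug iX (proj1 (andP bB)) ltXB.
have [xe|xne] := eqVneq x e.
  by subst x; move/negP: deJ; apply; apply: indep_sub ixX; exact: setUS.
have := Xmax (x |: X); rewrite ixX (subset_trans sJX (subsetUr _ _)).
rewrite subUset sub1set sXU !inE xne xB /= => /(_ isT).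
by rewrite cardsU1 xX add1n ltnn.
Qed.

(* Orthogonality: if x + J is dependent with J independent, then every
   cocircuit through x meets J.  (A circuit inside x + J meets the cocircuit
   in x, hence in a second element.) *)
Lemma cocircuit_meets C x J : cocircuit M C -> x \in C -> indep M J ->
  x \notin J -> ~~ indep M (x |: J) -> ~~ [disjoint J & C].
Proof.
move=> /andP[coC /forallP Cmin] xC iJ xJ dxJ; apply/negP => dJC.
have := Cmin x; rewrite xC /= => /existsP[B /andP[bB dCB]].
have dCB' y : y \in C -> y != x -> y \in B = false.
  by move=> yC yx; apply: (disjointFr dCB); rewrite !inE yx.
have xB : x \in B.
  apply/negPn/negP => xB; move/negP: coC; apply; apply/existsP; exists B.
  by rewrite bB -(setD1K xC) -setI_eq0 setIUl setU_eq0 !setI_eq0 disjoints1 xB.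
have [B' bB' sB'] := basis_exchange bB xB iJ xJ dxJ.
move/negP: coC; apply; apply/existsP; exists B'; rewrite bB' /=.
apply/pred0P => y /=; apply/negbTE/negP => /andP[yC yB'].
move: (subsetP sB' y yB'); rewrite !inE => /orP[/andP[yx yB]|yJ].
  by rewrite (dCB' y yC yx) in yB.
by rewrite (disjointFr dJC yJ) in yC.
Qed.

Lemma circuit_cocircuit_meet D C e : circuit D -> cocircuit M C ->
  e \in D -> e \in C -> exists2 y, y \in D :\ e & y \in C.
Proof.
move=> /andP[dD /forallP Dmin] coC eD eC.
have iDe : indep M (D :\ e) by exact: implyP (Dmin e) eD.
have eDe : e \notin D :\ e by rewrite !inE eqxx.
have dDe : ~~ indep M (e |: (D :\ e)) by rewrite setD1K.
have := cocircuit_meets coC eC iDe eDe dDe.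
by rewrite -setI_eq0 => /set0Pn[y]; rewrite inE => /andP[yDe yC]; exists y.
Qed.
End Bases.

Section Dual.
Variable T : finType.
Variable M : matroid T.
Implicit Types (B G K : {set T}).

Lemma coindep_basisC B : basis M B -> coindep M (~: B).
Proof. by move=> bB; apply/existsP; exists B; rewrite bB /= disjoints_subset subxx. Qed.

Lemma coindep0 : coindep M set0.
Proof.
have [B bB _] := basis_ext (indep0 M).
by apply/existsP; exists B; rewrite bB disjoints_subset sub0set.
Qed.

Lemma coindep_card B K : basis M B -> coindep M K -> #|K| <= #|~: B|.
Proof.
move=> bB /existsP[B' /andP[bB' dKB']].
have sizeC : #|~: B'| = #|~: B|.
  by apply/eqP; rewrite -(eqn_add2l #|B|) cardsC (basis_card bB bB') cardsC.
by rewrite -sizeC subset_leq_card // -disjoints_subset.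
Qed.

Lemma corank B : basis M B -> rank_of (coindep M) setT = #|~: B|.
Proof.
move=> bB; apply/eqP; rewrite eqn_leq rank_ge ?subsetT ?coindep_basisC // andbT.
by apply/bigmax_leqP => K /andP[_ /(coindep_card bB)].
Qed.

(* The complement of a hyperplane of the dual is dependent: otherwise it
   would extend to a basis whose complement, inside G, has full dual rank. *)
Lemma dual_hyperplane_compl_dep G : dual_hyperplane M G -> ~~ indep M (~: G).
Proof.
move=> /andP[_ /eqP rG]; apply/negP => iGC.
have [B bB sGCB] := basis_ext iGC.
have : #|~: B| <= rank_of (coindep M) G.
  by apply: rank_ge (coindep_basisC bB); rewrite -setCS setCK.
by rewrite -(corank bB) -rG ltnn.
Qed.

(* Removing any element x of the complement of a dual hyperplane G leaves an
   independent set: x |: G contains a dual-independent set of full dual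
   rank, i.e. the complement of a basis, and that basis contains ~: G :\ x. *)
Lemma dual_hyperplane_compl_indep G x : dual_hyperplane M G -> x \notin G ->
  indep M (~: G :\ x).
Proof.
move=> hG xG.
have [K /andP[sKxG coK] rK] := rank_witness (x |: G) coindep0.
have /existsP[B /andP[bB dKB]] := coK.
have KBC : K = ~: B.
  apply/eqP; rewrite eqEcard -disjoints_subset dKB /=.
  by rewrite -rK (hyperplane_add_rank hG xG) (corank bB).
apply: indep_sub (proj1 (andP bB)); apply/subsetP => y.
rewrite !inE => /andP[yx yG]; apply/negPn/negP => yB.
have : y \in K by rewrite KBC inE.
by move/(subsetP sKxG); rewrite !inE (negbTE yx) (negbTE yG).
Qed.

Lemma dual_hyperplane_circuit G : dual_hyperplane M G -> circuit M (~: G).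
Proof.
move=> hG; rewrite /circuit dual_hyperplane_compl_dep //=.
by apply/forall_inP => x; rewrite inE => /(dual_hyperplane_compl_indep hG).
Qed.
End Dual.

Theorem mainTheorem16 (n : nat) (M : matroid 'I_n.+1)
  (Hloop : loopless M) (Hcoloop : coloopless M)
  (S G : {set 'I_n.+1}) :
  indep M S -> dual_hyperplane M G ->
  cl M S :|: G != setT ->
  cl M S :|: G :|: Pset M S != setT.
Proof.
move=> iS hG FG; apply/negP => /eqP FGP.
have covered y : y \in cl M S :|: G :|: Pset M S by rewrite FGP inE.
have /set0Pn[x0] : ~: (cl M S :|: G) != set0.
  by apply: contra FG => /eqP/(congr1 (@setC _)); rewrite setCK setC0 => ->.
rewrite !inE negb_or => /andP[x0F x0G].
have x0P : x0 \in Pset M S by have := covered x0; rewrite !inE (negbTE x0F) (negbTE x0G).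
have [e /andP[eG eP] emax] := @arg_maxnP _ x0
  (fun e => (e \notin G) && (e \in Pset M S)) val (introT andP (conj x0G x0P)).
move: (eP); rewrite inE => /andP[eS /existsP[C /and4P[coC sCS eC /forall_inP eminC]]].
have eGC : e \in ~: G by rewrite inE.
have [y yGCe yC] := circuit_cocircuit_meet (dual_hyperplane_circuit hG) coC eGC eC.
move: yGCe; rewrite !inE => /andP[ye yG].
have yS : y \notin S by have := subsetP sCS y yC; rewrite inE.
have := covered y; rewrite !in_setU (negbTE yG) orbF => /orP[yF|yP].
- (* y in cl(S): the circuit in S + y would meet C only in y *)
  have := cocircuit_meets coC yC iS yS (closure_dep iS yF yS).
  by rewrite disjoint_sym disjoints_subset sCS.
- (* y in P(S): y <= e by maximality of e, and e <= y since e = min C *)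
  have ley : val y <= val e by apply: emax; rewrite yG yP.
  by move/eqP: ye; apply; apply/val_inj/eqP; rewrite eqn_leq ley eminC.
Qed.
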